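(* Let $p>3$ be a prime and for $1\le k\le p-1$ define $$G(p,k)=(-1)^{p+k}\frac{p\binom{2p-1}{p-1}\binom{4p+2k-2}{2p+k-1}\binom{2p-k-1}{p-1}\binom{2p+k-1}{2k}}{4^{5p-k-4}\binom{2k}{k}}.$$ Then $$G\Big(p,\frac{p+1}{2}\Big)\equiv(-1)^{(p-1)/2}3p\left(1-5pq_p(2)+15p^2q_p(2)^2\right)\pmod{p^4}.$$
   Context: $q_p(2)=(2^{p-1}-1)/p$ is the Fermat quotient. Congruences between rationals modulo $p^m$ mean the difference is $p^m$ times a rational with denominator prime to $p$. *)

From HB Require Import structures.
From mathcomp Require Import all_boot all_order all_algebra.
Set Implicit Arguments. Unset Strict Implicit. Unset Printing Implicit Defensive.
Import Order.TTheory GRing.Theory Num.Theory.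
Local Open Scope ring_scope.

Definition fermat_q2 (p : nat) : rat := ((2 ^ p.-1)%N%:R - 1) / p%:R.

Definition rat_congr (p m : nat) (x y : rat) : Prop :=
  exists r : rat, x - y = (p ^ m)%N%:R * r /\ coprime p `|denq r|%N.

Definition G (p k : nat) : rat :=
  (-1) ^+ (p + k) *
  ((p * 'C(2 * p - 1, p - 1) * 'C(4 * p + 2 * k - 2, 2 * p + k - 1)
      * 'C(2 * p - k - 1, p - 1) * 'C(2 * p + k - 1, 2 * k))%N%:R
   / ((4 ^ (5 * p - k - 4))%N%:R * ('C(2 * k, k))%:R)).

From HB Require Import structures.
From mathcomp Require Import all_boot all_order all_algebra.
From mathcomp Require Import zify ring.
Import Order.TTheory GRing.Theory Num.Theory.
Set Implicit Arguments. Unset Strict Implicit. Unset Printing Implicit Defensive.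
Local Open Scope ring_scope.

(** Write p = 2n + 1 and F(y) = C(yp + n, n) = prod_(1 <= i <= n) (1 + yp/i).
    Unfolding the binomial coefficients gives G(p, n + 1) = (-1)^n 3p P / (F(2) 4^(9n))
    with P = prod_(a = 1..4) C(ap + 2n, 2n).  Since sum_(i <= n) 1/i^2 ≡ 0 (mod p),
    F is multiplicative modulo p^3: F(y) F(z) ≡ F(y + z).  Splitting C(ap + 2n, 2n)
    at i = n shows that it is ≡ 1, and the exact identity F(-1) = 4^n F(-1/2) gives
    F(-1) ≡ 4^(2n), hence F(2) ≡ 4^(-4n).  So the quotient is ≡ 4^(-5n), where
    4^n = 2^(p-1) = 1 + p q_p(2); expanding (1 + p q_p(2))^(-5) to second order and
    multiplying by p gives the congruence modulo p^4. *)

Lemma denq_frac_dvd (a b : int) : b != 0 -> (`|denq (a%:~R / b%:~R)| %| `|b|)%N.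
Proof.
move=> b0; set x : rat := _ / _.
have e : numq x * b = a * denq x.
  apply: (@intr_inj rat); rewrite !rmorphM /= numqE /x.
  by field; rewrite intr_eq0.
rewrite -(@Gauss_dvdr _ `|numq x|); last by rewrite coprime_sym coprime_num_den.
by rewrite -abszM e abszM dvdn_mull.
Qed.

(* [pint p] is the local ring Z_(p), [punit p] its group of units and [pdvd p m] the
   ideal p^m Z_(p).  Using [p^'.-nat] rather than [~~ (p %| _)] makes the closure
   properties hold for every p, so that they can be canonical instances. *)
Definition pint (p : nat) : {pred rat} := [pred x : rat | p^'.-nat `|denq x|%N].

Lemma pint_frac (p : nat) (a b : int) :
  b != 0 -> p^'.-nat `|b|%N -> a%:~R / b%:~R \in pint p.
Proof. by move=> b0; apply: pnat_dvd; apply: denq_frac_dvd. Qed.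

Fact pint_subring_closed (p : nat) : subring_closed (pint p).
Proof.
have frac x : x = (numq x)%:~R / (denq x)%:~R by rewrite divq_num_den.
have dx x : denq x != 0 := denq_neq0 x.
split=> [//|x y px py|x y px py]; rewrite (frac x) (frac y).
- rewrite -[_ - _](_ : (numq x * denq y - numq y * denq x)%:~R / (denq x * denq y)%:~R = _).
    by apply: pint_frac; rewrite ?mulf_neq0 // abszM pnatM; apply/andP.
  by rewrite rmorphB !rmorphM /=; field; rewrite !intr_eq0 !dx.
- rewrite -[_ * _](_ : (numq x * numq y)%:~R / (denq x * denq y)%:~R = _).
    by apply: pint_frac; rewrite ?mulf_neq0 // abszM pnatM; apply/andP.
  by rewrite !rmorphM /=; field; rewrite !intr_eq0 !dx.
Qed.

HB.instance Definition _ p :=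
  GRing.isSubringClosed.Build rat (pint p) (pint_subring_closed p).

Definition punit (p : nat) : {pred rat} :=
  [pred x | [&& x != 0, x \in pint p & x^-1 \in pint p]].

Fact punit_divr_closed p : divr_closed (punit p).
Proof.
split=> [|x y /and3P[x0 px px'] /and3P[y0 py py']].
  by rewrite inE invr1 oner_eq0 rpred1.
by rewrite inE mulf_neq0 ?invr_eq0 // invfM invrK !rpredM.
Qed.

HB.instance Definition _ p :=
  GRing.isDivClosed.Build rat (punit p) (punit_divr_closed p).

Definition pdvd (p m : nat) : {pred rat} := [pred x | x / p%:R ^+ m \in pint p].

Fact pdvd_zmod_closed p m : zmod_closed (pdvd p m).
Proof. by split=> [|x y px py]; rewrite inE ?mul0r ?mulrBl ?rpredB ?rpred0. Qed.

HB.instance Definition _ p m :=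
  GRing.isZmodClosed.Build rat (pdvd p m) (pdvd_zmod_closed p m).

Lemma pdvd0 p : pdvd p 0 =i pint p.
Proof. by move=> x; rewrite inE expr0 divr1. Qed.

Lemma pdvdM p m k x y : x \in pdvd p m -> y \in pdvd p k -> x * y \in pdvd p (m + k).
Proof. by move=> px py; rewrite inE exprD invfM mulrACA rpredM. Qed.

Lemma pdvdMr p m x y : x \in pdvd p m -> y \in pint p -> x * y \in pdvd p m.
Proof. by rewrite -pdvd0 -{2}[m]addn0; apply: pdvdM. Qed.

Lemma pdvdMl p m x y : x \in pint p -> y \in pdvd p m -> x * y \in pdvd p m.
Proof. by rewrite mulrC => px py; apply: pdvdMr. Qed.

Lemma punit_neq0 p x : x \in punit p -> x != 0.
Proof. by case/and3P. Qed.

Lemma pdvd_mulr_punit p m x u :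
  u \in punit p -> (x * u \in pdvd p m) = (x \in pdvd p m).
Proof.
case/and3P=> u0 pu pu'; apply/idP/idP => [pxu|px]; last exact: pdvdMr.
by rewrite -(mulfK u0 x) pdvdMr.
Qed.

Section PrimeModulus.

Variable p : nat.
Hypothesis p_prime : prime p.

Let p_neq0 : p%:R != 0 :> rat.
Proof. by rewrite pnatr_eq0 -lt0n prime_gt0. Qed.

Lemma pdvdW m k x : (k <= m)%N -> x \in pdvd p m -> x \in pdvd p k.
Proof.
move=> /subnK <- px; rewrite inE.
have -> : x / p%:R ^+ k = x / p%:R ^+ (m - k + k) * p%:R ^+ (m - k).
  by rewrite exprD; field; rewrite !expf_neq0.
by rewrite rpredM ?rpredX ?rpred_nat.
Qed.

Lemma pdvd_pint m x : x \in pdvd p m -> x \in pint p.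
Proof. by rewrite -pdvd0; apply: pdvdW. Qed.

Lemma pdvd_p : p%:R \in pdvd p 1.
Proof. by rewrite inE expr1 divff. Qed.

Lemma pint_natV (d : nat) : ~~ (p %| d)%N -> d%:R^-1 \in pint p.
Proof.
move=> pd; have d0 : d%:Z != 0 by apply: contraNneq pd => -[->].
by rewrite inE -[d%:R]/(d%:Z%:~R : rat) denqVz //= p'natE.
Qed.

Lemma punit_1p r : r \in pint p -> 1 + p%:R * r \in punit p.
Proof.
move=> pr; rewrite -(divq_num_den r); set a := numq r; set b := denq r.
have b0 : b != 0 := denq_neq0 r.
have pab : ~~ (p %| `|(b + p%:Z * a)%R|)%N.
  have : (p%:Z %| b + p%:Z * a)%Z = (p%:Z %| b)%Z by rewrite rpredDr ?dvdz_mulr.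
  by rewrite !dvdzE => ->; rewrite -p'natE.
have ab0 : b + p%:Z * a != 0 by apply: contraNneq pab => ->.
have -> : 1 + p%:R * (a%:~R / b%:~R) = (b + p%:Z * a)%:~R / b%:~R :> rat.
  by rewrite rmorphD rmorphM /=; field; rewrite intr_eq0.
rewrite inE mulf_neq0 ?invr_eq0 ?intr_eq0 //= invf_div.
by rewrite !pint_frac // p'natE.
Qed.

Lemma punit_1pdvd x : x - 1 \in pdvd p 1 -> x \in punit p.
Proof.
rewrite inE expr1 => px; rewrite -(subrK 1 x) addrC -(divfK p_neq0 (x - 1)) mulrC.
exact: punit_1p.
Qed.

Lemma rat_congrE m x y : rat_congr p m x y <-> x - y \in pdvd p m.
Proof.
rewrite /rat_congr inE natrX; split=> [[r [-> pr]]|pxy].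
  by rewrite [_ * r]mulrC mulfK ?expf_neq0 // inE p'natE // -prime_coprime.
exists ((x - y) / p%:R ^+ m); rewrite mulrC divfK ?expf_neq0 //.
by split=> //; rewrite prime_coprime // -p'natE.
Qed.

Lemma pdvd_natr_div (N d : nat) :
  (p %| N)%N -> ~~ (p %| d)%N -> N%:R / d%:R \in pdvd p 1.
Proof.
move=> /dvdnP[k ->] pd; rewrite inE expr1 natrM mulrAC mulfK //.
by rewrite rpredM ?rpred_nat ?pint_natV.
Qed.

Lemma prod_sub1_pdvd (I : eqType) (r : seq I) (a : I -> rat) m :
  {in r, forall i, a i - 1 \in pdvd p m} -> \prod_(i <- r) a i - 1 \in pdvd p m.
Proof.
elim: r => [|j r IH] ar; first by rewrite big_nil subrr rpred0.
have {}IH := IH (sub_in1 (@mem_behead _ (j :: r)) ar).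
have pr : \prod_(i <- r) a i \in pint p.
  by rewrite -(subrK 1 (\prod_(i <- r) _)) rpredD ?rpred1 ?(pdvd_pint IH).
rewrite big_cons (_ : _ - 1 = (a j - 1) * \prod_(i <- r) a i + (\prod_(i <- r) a i - 1)).
  by rewrite rpredD ?pdvdMr ?ar ?mem_head.
by ring.
Qed.

Lemma prod_quad_pdvd (I : eqType) (r : seq I) (x w : I -> rat) :
  {in r, forall i, x i \in pdvd p 1} -> {in r, forall i, w i \in pdvd p 2} ->
  \prod_(i <- r) (1 + x i + w i) - \prod_(i <- r) (1 + x i) - \sum_(i <- r) w i
    \in pdvd p 3.
Proof.
elim: r => [|j r IH] xr wr; first by rewrite !big_nil !subrr rpred0.
have xr' := sub_in1 (@mem_behead _ (j :: r)) xr.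
have wr' := sub_in1 (@mem_behead _ (j :: r)) wr.
have xj := xr j (mem_head j r); have wj := wr j (mem_head j r).
have A1 : \prod_(i <- r) (1 + x i) - 1 \in pdvd p 1.
  by apply: prod_sub1_pdvd => i ri; rewrite addrAC subrr add0r xr'.
have W2 : \sum_(i <- r) w i \in pdvd p 2 by rewrite big_seq rpred_sum // => i /wr'.
rewrite !big_cons; set B := \prod_(i <- r) _; set A := \prod_(i <- r) _.
set W := \sum_(i <- r) _.
have -> : (1 + x j + w j) * B - (1 + x j) * A - (w j + W) =
    (B - A - W) * (1 + x j + w j) + ((A - 1) * w j + W * x j + W * w j) by ring.
have pxw : 1 + x j + w j \in pint p.
  by rewrite !rpredD ?rpred1 ?(pdvd_pint xj) ?(pdvd_pint wj).
apply: rpredD; first by apply: pdvdMr => //; apply: IH.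
apply: rpredD; first apply: rpredD.
- exact: (pdvdM A1 wj).
- exact: (pdvdM W2 xj).
- by apply: (@pdvdW 4); rewrite // (pdvdM W2 wj).
Qed.

Lemma inv_pow5_pdvd x : x - 1 \in pdvd p 1 ->
  x ^+ 5 * (1 - 5 * (x - 1) + 15 * (x - 1) ^+ 2) - 1 \in pdvd p 3.
Proof.
move=> pt; set t := x - 1 in pt *; have it := pdvd_pint pt.
have -> : x ^+ 5 * (1 - 5 * t + 15 * t ^+ 2) - 1
    = t * t * t * (35 + t * (105 + t * (126 + t * (70 + t * 15)))).
  by rewrite -(subrK 1 x) -/t; ring.
apply: pdvdMr; first exact: (pdvdM (pdvdM pt pt) pt).
by do 4 (apply: rpredD; first exact: rpred_nat; apply: rpredM => //).
Qed.

End PrimeModulus.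

(* [binq c m] is the binomial coefficient C(c + m, m), for rational c. *)
Definition binq (c : rat) (m : nat) : rat := \prod_(0 <= i < m) (1 + c / i.+1%:R).

Lemma binq0 m : binq 0 m = 1.
Proof. by rewrite /binq big1 // => i _; rewrite mul0r addr0. Qed.

Lemma fact_binq (c m : nat) : (c + m)`!%:R = c`!%:R * m`!%:R * binq c%:R m :> rat.
Proof.
elim: m => [|m IH]; first by rewrite addn0 fact0 /binq big_geq // !mulr1.
rewrite addnS !factS !natrM IH /binq big_nat_recr //= -addnS natrD.
by field; rewrite nat1r pnatr_eq0.
Qed.

Lemma natr_bin a b :
  (b <= a)%N -> 'C(a, b)%:R = a`!%:R / (b`!%:R * (a - b)`!%:R) :> rat.
Proof.
move=> le_ba; rewrite -(bin_fact le_ba) !natrM mulfK //.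
by rewrite mulf_neq0 // pnatr_eq0 -lt0n fact_gt0.
Qed.

Lemma fact_mulS_binq m a : (a * m.+1 + m)`!%:R =
  a`!%:R * m.+1%:R ^+ a * m`!%:R ^+ a.+1 *
    \prod_(1 <= b < a.+1) binq (b%:R * m.+1%:R) m :> rat.
Proof.
elim: a => [|a IH]; first by rewrite big_geq // mul0n !expr1 expr0 fact0 !mul1r mulr1.
rewrite fact_binq [(a.+1 * m.+1)`!](_ : _ = (a * m.+1 + m).+1`!); last by congr _`!; lia.
rewrite factS (_ : (a * m.+1 + m).+1 = a.+1 * m.+1)%N; last lia.
by rewrite [a.+1`!]factS !natrM IH [in RHS]big_nat_recr //= !exprS; ring.
Qed.

Lemma binq_double c m :
  binq c m.*2 * binq (- (m.*2.+1)%:R) m = binq c m * binq (- (c + (m.*2.+1)%:R)) m.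
Proof.
rewrite /binq (@big_cat_nat _ _ _ m) //= ?leq_double ?leq_addr //; last lia.
rewrite -mulrA; congr (_ * _).
rewrite -{1}[m]add0n big_addn (_ : m.*2 - m = m)%N; last lia.
rewrite big_nat_rev /= add0n -big_split /=.
apply: eq_big_nat => i /andP[_ lt_im].
have -> : (m.*2.+1)%:R = (m - i.+1 + m).+1%:R + i.+1%:R :> rat.
  by rewrite -natrD; congr _%:R; lia.
by field; rewrite -natrD !nat1r !pnatr_eq0.
Qed.

Lemma binqN c m : binq (- c) m =
  (-1) ^+ m * \prod_(0 <= i < m) (c - i.+1%:R) / \prod_(0 <= i < m) i.+1%:R.
Proof.
rewrite /binq -[in (-1) ^+ m](subn0 m) -prodr_const_nat -big_split -prodf_div /=.
by apply: eq_bigr => i _; field; rewrite nat1r pnatr_eq0.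
Qed.

Lemma prod_rising_double m :
  (\prod_(0 <= i < m) (m.+1 + i) = 2 ^ m * \prod_(0 <= i < m) i.*2.+1)%N.
Proof.
elim: m => [|m IH]; first by rewrite !big_geq.
have shift : (m.+1 * \prod_(0 <= i < m.+1) (m.+2 + i)
              = \prod_(0 <= i < m.+2) (m.+1 + i))%N.
  rewrite [RHS]big_nat_recl // addn0; congr (_ * _)%N.
  by apply: eq_big_nat => i _; rewrite addnS.
apply/eqP; rewrite -(eqn_pmul2l (ltn0Sn m)) shift !big_nat_recr //= IH expnS.
by apply/eqP; lia.
Qed.

Lemma binq_neg_odd m :
  binq (- (m.*2.+1)%:R) m = (4 ^ m)%:R * binq (- ((m.*2.+1)%:R / 2)) m.
Proof.
have rev_rising : \prod_(0 <= i < m) ((m.*2.+1)%:R - i.+1%:R)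
                  = (\prod_(0 <= i < m) (m.+1 + i))%N%:R :> rat.
  rewrite natr_prod big_nat_rev /=; apply: eq_big_nat => i /andP[_ lt_im].
  by rewrite -natrB; [congr _%:R | ]; lia.
have rev_odd : \prod_(0 <= i < m) ((m.*2.+1)%:R / 2 - i.+1%:R)
               = (\prod_(0 <= i < m) i.*2.+1)%N%:R / (2 ^ m)%:R :> rat.
  rewrite natr_prod natrX -[in 2%:R ^+ m](subn0 m) -prodr_const_nat -prodf_div.
  rewrite big_nat_rev /=; apply: eq_big_nat => i /andP[_ lt_im].
  have -> : (m.*2.+1)%:R = (m - i.+1).*2.+1%:R + (i.+1).*2%:R :> rat.
    by rewrite -natrD; congr _%:R; lia.
  by rewrite -!muln2 !natrM; field.
rewrite !binqN rev_rising rev_odd prod_rising_double (_ : 4 = 2 * 2)%N //.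
rewrite expnMn !natrM !natrX.
have prod_neq0 : \prod_(0 <= i < m) i.+1%:R != 0 :> rat.
  by rewrite prodf_seq_neq0; apply/allP => i _; rewrite pnatr_eq0.
by field; rewrite prod_neq0 expf_neq0.
Qed.

Lemma sum_nat_odd_sym (V : nmodType) (F : nat -> V) n :
  (forall i, (i < n)%N -> F (n.*2 - i)%N = F i.+1) ->
  \sum_(0 <= i < n.*2.+1) F i = F 0%N + (\sum_(0 <= i < n) F i.+1) *+ 2.
Proof.
move=> Fsym; rewrite big_ltn // mulr2n; congr (_ + _).
rewrite (@big_cat_nat _ _ _ n.+1) //=; last lia.
rewrite big_add1 /=; congr (_ + _).
rewrite -{1}[n.+1]add0n big_addn (_ : n.*2.+1 - n.+1 = n)%N; last lia.
rewrite big_nat_rev /=; apply: eq_big_nat => i /andP[_ lt_in].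
by rewrite -Fsym //; congr F; lia.
Qed.

Lemma natr_fact_div_sqr (K : fieldType) n i : (i < n)%N -> i.+1%:R != 0 :> K ->
  ((n`! %/ i.+1) ^ 2)%:R = n`!%:R ^+ 2 * i.+1%:R ^- 2 :> K.
Proof.
move=> lt_in i_neq0; rewrite natrX natr_div ?unitfE ?dvdn_fact //.
by rewrite exprMn exprVn.
Qed.

Section FiniteField.

Variable p : nat.
Hypothesis p_prime : prime p.

Lemma natf_Fp_eq0 m : ((m%:R : 'F_p) == 0) = (p %| m)%N.
Proof. by rewrite (dvdn_pcharf (pchar_Fp p_prime)). Qed.

Lemma sum_Fp_nat (V : nmodType) (g : 'F_p -> V) :
  \sum_(x : 'F_p) g x = \sum_(0 <= i < p) g i%:R.
Proof.
rewrite (eq_bigr (fun x : 'F_p => g (x : nat)%:R)); last by move=> x _; rewrite natr_Zp.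
by rewrite -(big_mkord xpredT (fun i => g i%:R)) Fp_cast.
Qed.

Hypothesis p_gt3 : (3 < p)%N.

(* Scaling by 2 permutes 'F_p, so the sum S satisfies 4 S = S. *)
Lemma sum_Fp_sqr : \sum_(x : 'F_p) x ^+ 2 = 0.
Proof.
have nat_neq0 k : (0 < k < p)%N -> k%:R != 0 :> 'F_p.
  by case/andP=> k_gt0 lt_kp; rewrite natf_Fp_eq0 gtnNdvd.
set S := \sum_(x : 'F_p) x ^+ 2.
have S4 : S = 4%:R * S.
  rewrite {1}/S (reindex_inj (mulfI (nat_neq0 2%N _))) /=; last lia.
  by rewrite mulr_sumr; apply: eq_bigr => x _; rewrite exprMn -natrX.
have /eqP : 3%:R * S = 0.
  by rewrite [3%:R](_ : _ = 4%:R - 1) ?mulrBl -?S4 ?mul1r ?subrr //; ring.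
have three_neq0 : 3%:R != 0 :> 'F_p by apply: nat_neq0; lia.
by rewrite mulf_eq0 (negPf three_neq0) => /eqP.
Qed.

End FiniteField.

Section OddPrime.

Variables p n : nat.
Hypotheses (p_prime : prime p) (p_gt3 : (3 < p)%N) (p_odd : p = n.*2.+1).

Let lt_np : (n < p)%N. Proof. by rewrite p_odd -addnn; lia. Qed.
Let pint_N1 : -1 \in pint p. Proof. by rewrite rpredN rpred1. Qed.

(* Inversion permutes the nonzero residues, and i, p - i have the same inverse
   square, so twice the sum is sum_(x in 'F_p) x^2 = 0. *)
Lemma sum_invsqr_Fp : \sum_(0 <= i < n) i.+1%:R ^- 2 = 0 :> 'F_p.
Proof.
have sym i : (i < n)%N -> (n.*2 - i)%:R ^- 2 = i.+1%:R ^- 2 :> 'F_p.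
  move=> lt_in; have /eqP : (n.*2 - i)%:R + i.+1%:R = 0 :> 'F_p.
    by rewrite -natrD (_ : _ + _ = p)%N ?(pcharf0 (pchar_Fp p_prime)) //; lia.
  by rewrite addr_eq0 => /eqP ->; rewrite sqrrN.
have := sum_Fp_sqr p_prime p_gt3.
rewrite (reindex_inj (@invr_inj _)) /= (eq_bigr (fun x => x ^- 2)) => [|x _]; last first.
  by rewrite exprVn.
rewrite sum_Fp_nat //.
have := @sum_nat_odd_sym _ (fun i => i%:R ^- 2 : 'F_p) n sym; rewrite -p_odd => ->.
rewrite ?natr0 expr0n invr0 add0r -mulr_natr.
have two_neq0 : 2%:R != 0 :> 'F_p by rewrite natf_Fp_eq0 // gtnNdvd //; lia.
by move/eqP; rewrite mulf_eq0 (negPf two_neq0) orbF => /eqP.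
Qed.

Lemma sum_invsqr_pdvd : \sum_(0 <= i < n) i.+1%:R ^- 2 \in pdvd p 1.
Proof.
set N := (\sum_(0 <= i < n) (n`! %/ i.+1) ^ 2)%N.
have p'i i : (i < n)%N -> ~~ (p %| i.+1)%N by move=> lt_in; rewrite gtnNdvd //; lia.
have p'fact : ~~ (p %| n`! ^ 2)%N.
  rewrite -natf_Fp_eq0 // natrX expf_neq0 // fact_prod natr_prod prodf_seq_neq0.
  apply/allP => i; rewrite mem_index_iota => /andP[i_gt0 le_in].
  by rewrite natf_Fp_eq0 // gtnNdvd //; lia.
have pN : (p %| N)%N.
  rewrite -natf_Fp_eq0 // natr_sum.
  rewrite (eq_big_nat _ _ (F2 := fun i => n`!%:R ^+ 2 * i.+1%:R ^- 2)).
    by rewrite -mulr_sumr sum_invsqr_Fp mulr0.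
  by move=> i /andP[_ lt_in]; rewrite natr_fact_div_sqr // natf_Fp_eq0 // p'i.
have -> : \sum_(0 <= i < n) i.+1%:R ^- 2 = N%:R / (n`! ^ 2)%:R :> rat.
  rewrite /N natr_sum mulr_suml; apply: eq_big_nat => i /andP[_ lt_in].
  rewrite natr_fact_div_sqr ?pnatr_eq0 // natrX mulrAC mulfV ?mul1r //.
  by rewrite expf_neq0 // pnatr_eq0 -lt0n fact_gt0.
exact: pdvd_natr_div.
Qed.

Local Notation F y := (binq (y * p%:R) n).
Local Notation T := ((4 ^ n)%:R : rat).

Lemma binq_punit m y : (m < p)%N -> y \in pint p -> binq (y * p%:R) m \in punit p.
Proof.
move=> lt_mp py; rewrite /binq big_seq; apply: rpred_prod => i.
rewrite mem_index_iota => /andP[_ lt_im].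
by rewrite mulrAC mulrC punit_1p // rpredM // pint_natV // gtnNdvd //; lia.
Qed.

(* Termwise, (1 + yp/i)(1 + zp/i) = 1 + (y + z)p/i + yz p^2/i^2, and the quadratic
   terms add up to yz p^2 sum_i 1/i^2, which vanishes modulo p^3. *)
Lemma binq_mul_pdvd y z :
  y \in pint p -> z \in pint p -> F y * F z - F (y + z) \in pdvd p 3.
Proof.
move=> py pz; have pp2 := pdvdM (pdvd_p p_prime) (pdvd_p p_prime).
pose x i := (y + z) * p%:R / i.+1%:R.
pose w i := y * z * p%:R ^+ 2 * i.+1%:R ^- 2.
have FyFz : F y * F z = \prod_(0 <= i < n) (1 + x i + w i).
  rewrite /binq -big_split; apply: eq_bigr => i _; rewrite /x /w /=.
  by field; rewrite nat1r pnatr_eq0.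
have W3 : \sum_(0 <= i < n) w i \in pdvd p 3.
  rewrite -mulr_sumr -[3%N]/(2 + 1)%N pdvdM ?sum_invsqr_pdvd //.
  by rewrite pdvdMl ?rpredM // expr2.
rewrite FyFz -[_ - _](subrK (\sum_(0 <= i < n) w i)) rpredD //.
apply: prod_quad_pdvd => // i; rewrite mem_index_iota => /andP[_ lt_in];
  have pi : i.+1%:R^-1 \in pint p by rewrite pint_natV // gtnNdvd //; lia.
- by rewrite /x mulrAC mulrC pdvdMr ?pdvd_p // rpredM ?rpredD.
- have -> : w i = p%:R * p%:R * (y * z * i.+1%:R ^- 2) by rewrite /w; ring.
  by rewrite pdvdMr // -exprVn !rpredM ?rpredX.
Qed.

(* binq (yp) 2n * F(-1) = F(y) F(-(y + 1)), which is F(-1) modulo p^3. *)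
Lemma binq_double_pdvd y : y \in pint p -> binq (y * p%:R) n.*2 - 1 \in pdvd p 3.
Proof.
move=> py; rewrite -(pdvd_mulr_punit _ _ (binq_punit lt_np pint_N1)) mulrBl mul1r.
have -> : binq (y * p%:R) n.*2 * F (-1) = F y * F (- (y + 1)).
  by rewrite mulN1r mulNr mulrDl mul1r p_odd binq_double.
by rewrite -(_ : y + - (y + 1) = -1) ?binq_mul_pdvd ?rpredN ?rpredD ?rpred1 //; ring.
Qed.

(* F(-1) = T F(-1/2) exactly, while F(-1/2)^2 = F(-1) modulo p^3. *)
Lemma binq_neg1_pdvd : F (-1) - T ^+ 2 \in pdvd p 3.
Proof.
pose h : rat := - 2%:R^-1.
have ph : h \in pint p by rewrite rpredN pint_natV // gtnNdvd //; lia.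
have FT : F (-1) = T * F h.
  by rewrite mulN1r mulNr p_odd binq_neg_odd [2%:R^-1 * _]mulrC.
rewrite -(pdvd_mulr_punit _ _ (binq_punit lt_np pint_N1)).
have -> : (F (-1) - T ^+ 2) * F (-1) = T ^+ 2 * (F h * F h - F (h + h)).
  by rewrite (_ : h + h = -1) ?FT; [ring | rewrite /h; field].
by rewrite pdvdMl ?rpredX ?rpred_nat ?binq_mul_pdvd.
Qed.

(* F(2) F(-1)^2 = F(1) F(-1) = F(0) = 1 and F(-1) = T^2 modulo p^3. *)
Lemma binq2_pdvd : F 2 * T ^+ 4 - 1 \in pdvd p 3.
Proof.
have pF y : y \in pint p -> F y \in pint p.
  by move=> py; case/and3P: (binq_punit lt_np py).
have -> : F 2 * T ^+ 4 - 1 = - F 2 * ((F (-1) - T ^+ 2) * (F (-1) + T ^+ 2))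
    + (F 2 * F (-1) - F (2 + -1)) * F (-1) + (F 1 * F (-1) - F (1 + -1)).
  by rewrite (_ : 2 + -1 = 1) ?subrr ?mul0r ?binq0; ring.
apply: rpredD; first apply: rpredD.
- apply: pdvdMl; first by rewrite rpredN pF ?rpred_nat.
  apply: pdvdMr; first exact: binq_neg1_pdvd.
  by rewrite rpredD ?rpredX ?rpred_nat ?pF.
- by apply: pdvdMr; [apply: binq_mul_pdvd; rewrite ?rpred_nat | exact: pF].
- by apply: binq_mul_pdvd; rewrite ?rpred1.
Qed.

Lemma four_pow_pdvd : T - 1 \in pdvd p 1.
Proof.
have p_dvd : (p %| 4 ^ n - 1)%N.
  have p'2 : coprime p 2 by rewrite prime_coprime // gtnNdvd //; lia.
  rewrite -(Gauss_dvdr _ p'2) mulnBr muln1 -eqn_mod_dvd; last first.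
    by rewrite -{1}[2%N]muln1 leq_pmul2l // expn_gt0.
  rewrite (_ : 4 = 2 ^ 2)%N // -expnM -expnS mul2n -p_odd; apply/eqP.
  exact: fermat_little.
rewrite (_ : T - 1 = (4 ^ n - 1)%N%:R / 1%:R); last by rewrite divr1 natrB ?expn_gt0.
by apply: (pdvd_natr_div p_prime p_dvd); rewrite dvdn1 neq_ltn prime_gt1 ?orbT.
Qed.

(* The numerator is 1 and F(2) T^4 is 1 modulo p^3, so the ratio is T^-5. *)
Lemma binq_ratio_pdvd :
  (\prod_(1 <= a < 5) binq (a%:R * p%:R) n.*2) / (F 2 * T ^+ 9)
    - (1 - 5 * (T - 1) + 15 * (T - 1) ^+ 2) \in pdvd p 3.
Proof.
have uT : T \in punit p := punit_1pdvd p_prime four_pow_pdvd.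
have uD : F 2 * T ^+ 9 \in punit p.
  by rewrite rpredM ?rpredX ?binq_punit ?rpred_nat.
rewrite -(pdvd_mulr_punit _ _ uD) mulrBl (divfK (punit_neq0 uD)).
have split_ratio (P Y u t : rat) :
    P - Y * (u * t ^+ 9) = (P - 1) - Y * t ^+ 5 * (u * t ^+ 4 - 1) - (t ^+ 5 * Y - 1).
  by ring.
rewrite split_ratio; apply: rpredB; first apply: rpredB.
- by apply: (prod_sub1_pdvd p_prime) => a _; rewrite binq_double_pdvd ?rpred_nat.
- apply: pdvdMl; last exact: binq2_pdvd.
  have [_ pT _] := and3P uT; have pt := pdvd_pint p_prime four_pow_pdvd.
  by rewrite rpredM ?rpredX // rpredD ?rpredB ?rpred1 ?rpredM ?rpredX ?rpred_nat.
- by have := inv_pow5_pdvd p_prime four_pow_pdvd.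
Qed.

Lemma G_half_fact : G p n.+1 =
  (-1) ^+ n * p%:R * (p + n.*2)`!%:R * (4 * p + n.*2)`!%:R * n.+1`!%:R ^+ 2 /
  (T ^+ 9 * n.*2`!%:R ^+ 2 * p`!%:R * n`!%:R * (2 * p + n)`!%:R * p.+1`!%:R ^+ 2).
Proof.
rewrite /G (_ : p + n.+1 = n + n.+1 * 2)%N; last lia.
rewrite exprD exprM sqrr_sign mulr1 (_ : 5 * p - n.+1 - 4 = n * 9)%N; last lia.
rewrite expnM natrX (_ : 2 * n.+1 = p.+1)%N; last lia.
rewrite (_ : 2 * p - 1 = p + n.*2)%N; last lia.
rewrite (_ : 4 * p + p.+1 - 2 = 4 * p + n.*2)%N; last lia.
rewrite (_ : 2 * p + n.+1 - 1 = 2 * p + n)%N; last lia.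
rewrite (_ : 2 * p - n.+1 - 1 = n.*2 + n)%N; last lia.
rewrite (_ : p - 1 = n.*2)%N; last lia.
rewrite !factS !natrM !natr_bin; try lia.
rewrite (_ : p + n.*2 - n.*2 = p)%N; last lia.
rewrite (_ : 4 * p + n.*2 - (2 * p + n) = 2 * p + n)%N; last lia.
rewrite (_ : n.*2 + n - n.*2 = n)%N; last lia.
rewrite (_ : 2 * p + n - p.+1 = n.*2 + n)%N; last lia.
rewrite (_ : p.+1 - n.+1 = n.+1)%N; last lia.
have fact_neq0 k : k`!%:R != 0 :> rat by rewrite pnatr_eq0 -lt0n fact_gt0.
rewrite !factS !natrM.
by field; rewrite !fact_neq0 !nat1r !pnatr_eq0 expn_eq0.
Qed.

Lemma G_half : G p n.+1 = (-1) ^+ n * (3 * p%:R) *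
  ((\prod_(1 <= a < 5) binq (a%:R * p%:R) n.*2) / (F 2 * T ^+ 9)).
Proof.
have f1 := fact_mulS_binq n.*2 1; have f4 := fact_mulS_binq n.*2 4.
rewrite -p_odd (_ : 4`! = 24)%N // in f4.
rewrite -p_odd mul1n (_ : 1`! = 1)%N // mul1r expr1 in f1.
have f2pn : (2 * p + n)`!%:R = (2 * p)`!%:R * n`!%:R * F 2 :> rat.
  by rewrite fact_binq natrM.
have f2p : (2 * p)`! = (2 * p * (p + n.*2)`!)%N.
  by rewrite (_ : 2 * p = (p + n.*2).+1)%N ?factS //; lia.
have fp : p`! = (p * n.*2`!)%N by rewrite {1}p_odd factS -p_odd.
have lt_2np : (n.*2 < p)%N by lia.
have B_neq0 k : \prod_(1 <= a < k) binq (a%:R * p%:R) n.*2 != 0.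
  rewrite prodf_seq_neq0; apply/allP => a _.
  exact: punit_neq0 (binq_punit lt_2np (rpred_nat _ a)).
have fact_neq0 k : k`!%:R != 0 :> rat by rewrite pnatr_eq0 -lt0n fact_gt0.
rewrite G_half_fact [n.+1`!]factS [p.+1`!]factS f2pn f2p fp !natrM f1 f4.
rewrite (_ : n.+1%:R = p.+1%:R / 2); last first.
  by rewrite p_odd (_ : n.*2.+2 = n.+1 * 2)%N ?natrM; [field | lia].
field; rewrite !B_neq0 !fact_neq0 (punit_neq0 (binq_punit lt_np (rpred_nat _ 2))).
by rewrite nat1r !pnatr_eq0 expn_eq0 /= andbT -lt0n prime_gt0.
Qed.

End OddPrime.

Theorem lemma3p3 (p : nat) (hp : prime p) (hp3 : (3 < p)%N) :
  rat_congr p 4 (G p ((p + 1) %/ 2))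
    ((-1) ^+ ((p - 1) %/ 2) * (3 * p%:R) *
      (1 - 5 * p%:R * fermat_q2 p + 15 * p%:R ^+ 2 * fermat_q2 p ^+ 2)).
Proof.
have [n p_odd] : exists n, p = n.*2.+1.
  case: (even_prime hp) => [p2 | p_odd]; first lia.
  by exists p./2; rewrite -[in LHS](odd_double_half p) p_odd.
rewrite (_ : (p + 1) %/ 2 = n.+1)%N; last lia.
rewrite (_ : (p - 1) %/ 2 = n)%N; last lia.
have pq : p%:R * fermat_q2 p = (4 ^ n)%:R - 1.
  rewrite /fermat_q2 mulrC divfK ?pnatr_eq0 -?lt0n ?prime_gt0 //.
  by rewrite p_odd /= -mul2n expnM.
rewrite (G_half hp hp3 p_odd) (_ : 1 - _ + _ =
  1 - 5 * ((4 ^ n)%:R - 1) + 15 * ((4 ^ n)%:R - 1) ^+ 2); last by rewrite -pq; ring.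
apply/(rat_congrE hp); rewrite -mulrBr [_ * (3 * _)]mulrA -[_ * p%:R * _]mulrA.
apply: pdvdMl; first by rewrite rpredM ?rpredX ?rpredN ?rpred1 ?rpred_nat.
exact: (pdvdM (pdvd_p hp) (binq_ratio_pdvd hp hp3 p_odd)).
Qed.
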